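(* Consider the discrete setting described in the context, with constants $0<\gamma_1<\rho_\infty^*$, $\gamma_2>0$, and assume $\lambda=\Delta x/(2\Delta t)\ge v^*/2$. If $(\mathfrak f^n_{ij},\mathfrak g^n_{ij})_{i,j}$ satisfies, for all $i\in\mathcal I$, $j\in\mathcal J$, $$(\rho_\infty^*-\gamma_1)\chi_{1,j}\le\mathfrak f^n_{ij}\le(\rho_\infty^*+\gamma_2)\chi_{1,j},\qquad(\rho_\infty^*+\gamma_2)^{-1}\chi_{2,j}\le\mathfrak g^n_{ij}\le(\rho_\infty^*-\gamma_1)^{-1}\chi_{2,j},$$ then any solution $(\mathfrak f^{n+1}_{ij},\mathfrak g^{n+1}_{ij})_{i,j}$ of the truncated scheme $$\frac{\mathfrak f^{n+1}_{ij}-\mathfrak f^n_{ij}}{\Delta t}+\frac{1}{\Delta x\Delta v}\big(\mathcal F^{n+1}_{i+\frac12,j}-\mathcal F^{n+1}_{i-\frac12,j}\big)=\chi_{1,j}-\tilde\rho^{n+1}_{\mathfrak g,i}\tilde{\mathfrak f}^{n+1}_{ij},\quad \frac{\mathfrak g^{n+1}_{ij}-\mathfrak g^n_{ij}}{\Delta t}+\frac{1}{\Delta x\Delta v}\big(\mathcal G^{n+1}_{i+\frac12,j}-\mathcal G^{n+1}_{i-\frac12,j}\big)=\chi_{2,j}-\tilde\rho^{n+1}_{\mathfrak f,i}\tilde{\mathfrak g}^{n+1}_{ij}$$ satisfies the same bounds (with $n$ replaced by $n+1$) for all $i\in\mathcal I$, $j\in\mathcal J$.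
   Context: Space mesh: $N$ uniform cells of length $\Delta x$, $i\in\mathcal I=\mathbb Z/N\mathbb Z$ (periodic). Velocity mesh: $v^*>0$, $\Delta v=v^*/L$, $j\in\mathcal J=\{-L+1,\dots,L\}$, $v_j=(j-\tfrac12)\Delta v$. Time step $\Delta t>0$; $\lambda=\Delta x/(2\Delta t)$. $\rho_\infty^*>0$ a given constant. For $k=1,2$: $\chi_{k,j}>0$, $\chi_{k,j}=\chi_{k,1-j}$, $\sum_j\Delta v\chi_{k,j}=1$. Fluxes: $\mathcal F^{n+1}_{i+\frac12,j}=\Delta v\frac{v_j}{2}(\mathfrak f^{n+1}_{i+1,j}+\mathfrak f^{n+1}_{ij})-\Delta v\lambda(\mathfrak f^{n+1}_{i+1,j}-\mathfrak f^{n+1}_{ij})$, $\mathcal G$ likewise with $\mathfrak g$. Truncations: $\tilde{\mathfrak f}_{ij}=\min\big(\max(\mathfrak f_{ij},(\rho_\infty^*-\gamma_1)\chi_{1,j}),(\rho_\infty^*+\gamma_2)\chi_{1,j}\big)$, $\tilde{\mathfrak g}_{ij}=\min\big(\max(\mathfrak g_{ij},(\rho_\infty^*+\gamma_2)^{-1}\chi_{2,j}),(\rho_\infty^*-\gamma_1)^{-1}\chi_{2,j}\big)$; $\tilde\rho_{\mathfrak f,i}=\sum_j\Delta v\,\tilde{\mathfrak f}_{ij}$, $\tilde\rho_{\mathfrak g,i}=\sum_j\Delta v\,\tilde{\mathfrak g}_{ij}$. *)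

(* the statement is purely algebraic/order-theoretic,
   so it is stated over an arbitrary real field R. *)
From mathcomp Require Import all_boot all_order all_algebra.
Set Implicit Arguments. Unset Strict Implicit. Unset Printing Implicit Defensive.
Import Order.TTheory GRing.Theory Num.Theory.
Local Open Scope ring_scope.

(* Space index i : 'I_N  (periodic: i+1 = ordS i, i-1 = ord_pred i).
   Velocity index k : 'I_(2L) encodes j = k - L + 1 in {-L+1,...,L};
   the reflection j |-> 1 - j is k |-> rev_ord k. *)

Definition jidx (L : nat) (k : 'I_(2 * L)) : int := (k : int) - (L : int) + 1.

Definition vel {R : realFieldType} (L : nat) (dv : R) (k : 'I_(2 * L)) : R :=
  ((jidx k)%:~R - 2^-1) * dv.

(* numerical flux at the interface i+1/2 *)
Definition flux {R : realFieldType} (N L : nat) (dv lam : R)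
  (f : 'I_N -> 'I_(2 * L) -> R) (i : 'I_N) (k : 'I_(2 * L)) : R :=
  dv * (vel dv k / 2) * (f (ordS i) k + f i k) - dv * lam * (f (ordS i) k - f i k).

Definition trunc {R : realFieldType} (lo hi x : R) : R := Num.min (Num.max x lo) hi.

Definition dens {R : realFieldType} (N L : nat) (dv : R)
  (h : 'I_N -> 'I_(2 * L) -> R) (i : 'I_N) : R := \sum_(k < 2 * L) dv * h i k.

From mathcomp Require Import all_boot all_order all_algebra.
From mathcomp Require Import ring lra.
Set Implicit Arguments. Unset Strict Implicit. Unset Printing Implicit Defensive.
Import Order.TTheory GRing.Theory Num.Theory.
Local Open Scope ring_scope.

(* Under the CFL condition the implicit upwind scheme for each velocity j can
   be written as u_i + a (u_i - u_{i+1}) + b (u_i - u_{i-1}) = u^n_i + dt S_i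
   with a, b >= 0, so a discrete maximum principle holds on the periodic grid.
   At a maximum above the upper bound (a minimum below the lower bound) the
   truncation freezes the unknown at that bound, and since the truncated
   densities are squeezed between the inverses of the bounds (the weights
   chi sum to one), the relaxation source has the sign that forbids it. *)

Section PeriodicMaxPrinciple.
Variables (R : realFieldType) (N : nat) (a b : R).
Hypotheses (a_ge0 : 0 <= a) (b_ge0 : 0 <= b).

Lemma periodic_max_principle (u w S : 'I_N -> R) (U : R) :
  (forall i, u i + a * (u i - u (ordS i)) + b * (u i - u (ord_pred i)) = w i + S i) ->
  (forall i, w i <= U) -> (forall i, U < u i -> S i <= 0) -> forall i, u i <= U.
Proof.
move=> E w_le S_le0 i.
case: (@arg_maxP _ R _ i xpredT u isT) => m _ u_le_m.
apply: le_trans (u_le_m i isT) _; rewrite leNgt; apply/negP => U_lt.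
have right_ge0 : 0 <= a * (u m - u (ordS m)).
  by rewrite mulr_ge0 // subr_ge0; exact: u_le_m.
have left_ge0 : 0 <= b * (u m - u (ord_pred m)).
  by rewrite mulr_ge0 // subr_ge0; exact: u_le_m.
by move: (E m) (w_le m) (S_le0 m U_lt); lra.
Qed.

Lemma periodic_min_principle (u w S : 'I_N -> R) (U : R) :
  (forall i, u i + a * (u i - u (ordS i)) + b * (u i - u (ord_pred i)) = w i + S i) ->
  (forall i, U <= w i) -> (forall i, u i < U -> 0 <= S i) -> forall i, U <= u i.
Proof.
move=> E w_ge S_ge0 i; rewrite -lerN2.
apply: (@periodic_max_principle (fun i => - u i) (fun i => - w i) (fun i => - S i)).
- by move=> j; rewrite -(opprD (w j)) -E; ring.
- by move=> j; rewrite lerN2.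
- by move=> j; rewrite ltrN2 oppr_le0; apply: S_ge0.
Qed.

End PeriodicMaxPrinciple.

Section Truncation.
Variables (R : realFieldType) (lo hi : R).
Hypothesis lo_le_hi : lo <= hi.

Lemma trunc_ge (x : R) : lo <= trunc lo hi x.
Proof. by rewrite /trunc le_min lo_le_hi le_max lexx orbT. Qed.

Lemma trunc_le (x : R) : trunc lo hi x <= hi.
Proof. by rewrite /trunc ge_min lexx orbT. Qed.

Lemma trunc_below (x : R) : x < lo -> trunc lo hi x = lo.
Proof. by move=> x_lt; rewrite /trunc max_r ?min_l // ltW. Qed.

Lemma trunc_above (x : R) : hi < x -> trunc lo hi x = hi.
Proof.
by move=> x_gt; rewrite /trunc max_l ?min_r // ltW // (le_lt_trans lo_le_hi).
Qed.

End Truncation.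

Lemma sum_scaled_weights (R : realFieldType) (n : nat) (dv c : R) (chi : 'I_n -> R) :
  \sum_(k < n) dv * chi k = 1 -> \sum_(k < n) dv * (c * chi k) = c.
Proof.
move=> chi_sum; rewrite -[RHS]mulr1 -chi_sum mulr_sumr.
by apply: eq_bigr => k _; ring.
Qed.

Lemma dens_trunc_bounds (R : realFieldType) (N L : nat) (dv lo hi : R)
    (chi : 'I_(2 * L) -> R) (h : 'I_N -> 'I_(2 * L) -> R) (i : 'I_N) :
  0 <= dv -> lo <= hi -> (forall k, 0 <= chi k) ->
  \sum_(k < 2 * L) dv * chi k = 1 ->
  lo <= dens dv (fun i k => trunc (lo * chi k) (hi * chi k) (h i k)) i <= hi.
Proof.
move=> dv_ge0 lo_le_hi chi_ge0 chi_sum.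
have range k : lo * chi k <= hi * chi k by rewrite ler_wpM2r.
apply/andP; split.
- rewrite -[X in X <= _](sum_scaled_weights lo chi_sum).
  by apply: ler_sum => k _; rewrite ler_wpM2l // trunc_ge.
- rewrite -[X in _ <= X](sum_scaled_weights hi chi_sum).
  by apply: ler_sum => k _; rewrite ler_wpM2l // trunc_le.
Qed.

Lemma norm_vel_le (R : realFieldType) (L : nat) (dv : R) (k : 'I_(2 * L)) :
  0 <= dv -> `|vel dv k| <= L%:R * dv.
Proof.
move=> dv_ge0; rewrite /vel normrM (ger0_norm dv_ge0) ler_wpM2r //.
have k_lt : (k%:R : R) + 1 <= 2 * L%:R.
  by rewrite -natrM natr1 ler_nat; exact: ltn_ord.
have -> : (jidx k)%:~R = (k%:R : R) - L%:R + 1.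
  by rewrite /jidx rmorphD rmorphB /= !pmulrn.
have k_ge0 : (0 : R) <= k%:R by [].
rewrite ler_norml; apply/andP; split; lra.
Qed.

Lemma implicit_scheme_upwind_form (R : realFieldType) (N L : nat) (dv dx dt r : R)
    (un u : 'I_N -> 'I_(2 * L) -> R) (i : 'I_N) (k : 'I_(2 * L)) :
  dv != 0 -> dx != 0 -> dt != 0 ->
  (u i k - un i k) / dt + (dx * dv)^-1 *
     (flux dv (dx / (2 * dt)) u i k - flux dv (dx / (2 * dt)) u (ord_pred i) k) = r ->
  u i k + (dx - vel dv k * dt) / (2 * dx) * (u i k - u (ordS i) k)
        + (dx + vel dv k * dt) / (2 * dx) * (u i k - u (ord_pred i) k)
  = un i k + dt * r.
Proof.
move=> dv_neq0 dx_neq0 dt_neq0 <-; rewrite /flux ord_predK.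
by field; rewrite dv_neq0 dx_neq0 dt_neq0.
Qed.

Lemma relaxation_source_ge0 (R : realFieldType) (c D chi : R) :
  0 < c -> 0 <= chi -> D <= c^-1 -> 0 <= chi - D * (c * chi).
Proof.
move=> c_gt0 chi_ge0 D_le.
have Dc_le1 : D * c <= 1 by rewrite -(mulVf (lt0r_neq0 c_gt0)) ler_wpM2r // ltW.
by rewrite mulrA -{1}[chi]mul1r -mulrBl mulr_ge0 // subr_ge0.
Qed.

Lemma relaxation_source_le0 (R : realFieldType) (c D chi : R) :
  0 < c -> 0 <= chi -> c^-1 <= D -> chi - D * (c * chi) <= 0.
Proof.
move=> c_gt0 chi_ge0 D_ge.
have Dc_ge1 : 1 <= D * c by rewrite -(mulVf (lt0r_neq0 c_gt0)) ler_wpM2r // ltW.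
by rewrite mulrA -{1}[chi]mul1r -mulrBl mulr_le0_ge0 // subr_le0.
Qed.

Lemma truncated_scheme_preserves_bounds (R : realFieldType) (N L : nat)
    (dv dx dt lo hi : R) (chi : 'I_(2 * L) -> R) (D : 'I_N -> R)
    (un u : 'I_N -> 'I_(2 * L) -> R) (k : 'I_(2 * L)) :
  0 < dv -> 0 < dx -> 0 < dt -> `|vel dv k| * dt <= dx ->
  0 < lo -> lo <= hi -> 0 <= chi k ->
  (forall i, hi^-1 <= D i <= lo^-1) ->
  (forall i, lo * chi k <= un i k <= hi * chi k) ->
  (forall i,
     (u i k - un i k) / dt + (dx * dv)^-1 *
       (flux dv (dx / (2 * dt)) u i k - flux dv (dx / (2 * dt)) u (ord_pred i) k)
     = chi k - D i * trunc (lo * chi k) (hi * chi k) (u i k)) ->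
  forall i, lo * chi k <= u i k <= hi * chi k.
Proof.
move=> dv_gt0 dx_gt0 dt_gt0 cfl lo_gt0 lo_le_hi chi_ge0 D_bounds un_bounds scheme.
have [a_ge0 b_ge0] : 0 <= (dx - vel dv k * dt) / (2 * dx) /\
                     0 <= (dx + vel dv k * dt) / (2 * dx).
  have : `|vel dv k * dt| <= dx by rewrite normrM (ger0_norm (ltW dt_gt0)).
  by rewrite ler_norml => /andP[? ?]; split; apply: divr_ge0; lra.
have E i := implicit_scheme_upwind_form (lt0r_neq0 dv_gt0) (lt0r_neq0 dx_gt0)
              (lt0r_neq0 dt_gt0) (scheme i).
have hi_gt0 : 0 < hi by apply: lt_le_trans lo_le_hi.
have range : lo * chi k <= hi * chi k by rewrite ler_wpM2r.
move=> i; apply/andP; split.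
- apply: (periodic_min_principle a_ge0 b_ge0 E) => [j | j below].
    by case/andP: (un_bounds j).
  rewrite trunc_below // mulr_ge0 ?(ltW dt_gt0) ?relaxation_source_ge0 //.
  by case/andP: (D_bounds j).
- apply: (periodic_max_principle a_ge0 b_ge0 E) => [j | j above].
    by case/andP: (un_bounds j).
  rewrite trunc_above // mulr_ge0_le0 ?(ltW dt_gt0) ?relaxation_source_le0 //.
  by case/andP: (D_bounds j).
Qed.

Theorem lemma5p5 (R : realFieldType) (N L : nat) (vstar dx dt rho g1 g2 : R)
  (chi1 chi2 : 'I_(2 * L) -> R)
  (fn gn f g : 'I_N -> 'I_(2 * L) -> R) :
  (0 < L)%N -> 0 < vstar -> 0 < dx -> 0 < dt -> 0 < rho ->
  0 < g1 -> g1 < rho -> 0 < g2 ->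
  vstar / 2 <= dx / (2 * dt) ->
  (forall k, 0 < chi1 k) -> (forall k, 0 < chi2 k) ->
  (forall k, chi1 k = chi1 (rev_ord k)) -> (forall k, chi2 k = chi2 (rev_ord k)) ->
  \sum_(k < 2 * L) (vstar / L%:R) * chi1 k = 1 ->
  \sum_(k < 2 * L) (vstar / L%:R) * chi2 k = 1 ->
  (forall i k, (rho - g1) * chi1 k <= fn i k <= (rho + g2) * chi1 k) ->
  (forall i k, (rho + g2)^-1 * chi2 k <= gn i k <= (rho - g1)^-1 * chi2 k) ->
  (forall i k,
     (f i k - fn i k) / dt
     + (dx * (vstar / L%:R))^-1 *
         (flux (vstar / L%:R) (dx / (2 * dt)) f i k
          - flux (vstar / L%:R) (dx / (2 * dt)) f (ord_pred i) k)
     = chi1 k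
       - dens (vstar / L%:R)
           (fun i' k' => trunc ((rho + g2)^-1 * chi2 k') ((rho - g1)^-1 * chi2 k') (g i' k')) i
         * trunc ((rho - g1) * chi1 k) ((rho + g2) * chi1 k) (f i k)) ->
  (forall i k,
     (g i k - gn i k) / dt
     + (dx * (vstar / L%:R))^-1 *
         (flux (vstar / L%:R) (dx / (2 * dt)) g i k
          - flux (vstar / L%:R) (dx / (2 * dt)) g (ord_pred i) k)
     = chi2 k
       - dens (vstar / L%:R)
           (fun i' k' => trunc ((rho - g1) * chi1 k') ((rho + g2) * chi1 k') (f i' k')) i
         * trunc ((rho + g2)^-1 * chi2 k) ((rho - g1)^-1 * chi2 k) (g i k)) ->
  forall i k,
    ((rho - g1) * chi1 k <= f i k <= (rho + g2) * chi1 k) /\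
    ((rho + g2)^-1 * chi2 k <= g i k <= (rho - g1)^-1 * chi2 k).
Proof.
move=> L_gt0 vstar_gt0 dx_gt0 dt_gt0 rho_gt0 g1_gt0 g1_lt_rho g2_gt0 cfl
  chi1_gt0 chi2_gt0 _ _ chi1_sum chi2_sum fn_bounds gn_bounds f_scheme g_scheme i k.
set dv := vstar / L%:R in chi1_sum chi2_sum f_scheme g_scheme.
have dv_gt0 : 0 < dv by rewrite divr_gt0 ?ltr0n.
have lo_gt0 : 0 < rho - g1 by rewrite subr_gt0.
have lo_le_hi : rho - g1 <= rho + g2 by lra.
have inv_le : (rho + g2)^-1 <= (rho - g1)^-1.
  by rewrite lef_pV2 ?posrE // addr_gt0.
have inv_hi_gt0 : 0 < (rho + g2)^-1 by rewrite invr_gt0 addr_gt0.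
have vstar_dt : vstar * dt <= dx.
  have halve : dx / (2 * dt) = dx / dt / 2 by field; rewrite lt0r_neq0.
  by move: cfl; rewrite halve ler_pM2r ?invr_gt0 ?ltr0n // ler_pdivlMr.
have vel_cfl : `|vel dv k| * dt <= dx.
  have Ldv : L%:R * dv = vstar by rewrite /dv mulrC divfK // pnatr_eq0 -lt0n.
  by apply: le_trans vstar_dt; rewrite -Ldv ler_wpM2r ?norm_vel_le ?ltW.
split.
- apply: (truncated_scheme_preserves_bounds dv_gt0 dx_gt0 dt_gt0 vel_cfl lo_gt0
           lo_le_hi (ltW (chi1_gt0 k)) _ (fn_bounds ^~ k) (f_scheme ^~ k)) => j.
  exact: dens_trunc_bounds (ltW dv_gt0) inv_le (fun k => ltW (chi2_gt0 k)) chi2_sum.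
- apply: (truncated_scheme_preserves_bounds dv_gt0 dx_gt0 dt_gt0 vel_cfl
           inv_hi_gt0 inv_le (ltW (chi2_gt0 k)) _ (gn_bounds ^~ k) (g_scheme ^~ k)) => j.
  rewrite !invrK.
  exact: dens_trunc_bounds (ltW dv_gt0) lo_le_hi (fun k => ltW (chi1_gt0 k)) chi1_sum.
Qed.
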